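(* Let ${\mathbf X} \in \mathbb{R}^{n \times d}$ be a matrix each of whose rows has Euclidean norm at most $1$, let $\gamma > 0$, and let ${\mathbf X}^*$ be the $\gamma$-smoothed version of ${\mathbf X}$ (defined in the context). Then the leverage scores of ${\mathbf X}^*$ satisfy $\ell_j({\mathbf X}^* ) \le 1/\gamma$ for all $j \in [n]$.
   Context: Write the singular value decomposition ${\mathbf X} = \sum_{k} \sigma_k u_k v_k^T$ with singular values $\sigma_k > 0$. The $\gamma$-smoothed matrix is ${\mathbf X}^* = \sum_{k : \sigma_k \ge \sqrt{\gamma}} \sigma_k u_k v_k^T$, i.e. obtained by discarding all singular values smaller than $\sqrt{\gamma}$. For a matrix ${\mathbf A} \in \mathbb{R}^{n\times d}$ with $j$-th row ${\mathbf A}[j,:]$, the $j$-th leverage score is $\ell_j({\mathbf A}) = {\mathbf A}[j,:]^T ({\mathbf A}^T {\mathbf A})^{+} {\mathbf A}[j,:]$, where $(\cdot)^+$ denotes the Moore–Penrose pseudoinverse. *)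

From HB Require Import structures.
From mathcomp Require Import all_boot all_order all_algebra.
From mathcomp Require Import boolp classical_sets reals.
Set Implicit Arguments. Unset Strict Implicit. Unset Printing Implicit Defensive.
Import Order.TTheory GRing.Theory Num.Theory.
Local Open Scope ring_scope.

Definition is_pinv (R : realType) (m n : nat) (A : 'M[R]_(m, n)) (B : 'M[R]_(n, m)) : Prop :=
  [/\ A *m B *m A = A, B *m A *m B = B,
      (A *m B)^T = A *m B & (B *m A)^T = B *m A].

(* The Moore-Penrose pseudoinverse (exists and is unique; chosen classically). *)
Definition pinv (R : realType) (m n : nat) (A : 'M[R]_(m, n)) : 'M[R]_(n, m) :=
  xget 0 (is_pinv A).

Definition leverage (R : realType) (n d : nat) (A : 'M[R]_(n, d)) (j : 'I_n) : R :=
  (row j A *m pinv (A^T *m A) *m (row j A)^T) 0 0.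

Definition is_svd (R : realType) (n d r : nat) (X : 'M[R]_(n, d))
    (s : 'I_r -> R) (U : 'M[R]_(n, r)) (V : 'M[R]_(d, r)) : Prop :=
  [/\ forall k, 0 < s k, U^T *m U = 1%:M, V^T *m V = 1%:M &
      X = \sum_(k < r) s k *: (col k U *m (col k V)^T)].

Definition smoothed (R : realType) (n d r : nat) (gamma : R)
    (s : 'I_r -> R) (U : 'M[R]_(n, r)) (V : 'M[R]_(d, r)) : 'M[R]_(n, d) :=
  \sum_(k < r | Num.sqrt gamma <= s k) s k *: (col k U *m (col k V)^T).

(* Write the smoothed matrix as [U diag(t) V^T], where [t] keeps the singular
   values [s_k >= sqrt gamma] and zeroes the others.  Its Gram matrix is
   [V diag(t^2) V^T], with pseudoinverse [V diag(t^-2) V^T], so the j-th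
   leverage score is [\sum_(k kept) U_jk^2].  Each kept term is at most
   [s_k^2 U_jk^2 / gamma], and [\sum_k s_k^2 U_jk^2] is the squared norm of
   the j-th row of X, which is at most 1. *)

From HB Require Import structures.
From mathcomp Require Import all_boot all_order all_algebra.
From mathcomp Require Import boolp classical_sets reals.
From mathcomp Require Import ring.
Set Implicit Arguments. Unset Strict Implicit. Unset Printing Implicit Defensive.
Import Order.TTheory GRing.Theory Num.Theory.
Local Open Scope ring_scope.

Lemma pinvP (R : realType) (m n : nat) (A : 'M[R]_(m, n)) (B : 'M[R]_(n, m)) :
  is_pinv A B -> is_pinv A (pinv A).
Proof. by move=> AB; apply: xgetPex; exists B. Qed.

Lemma sum_diag_outer (R : comPzSemiRingType) (n d r : nat) (U : 'M[R]_(n, r))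
    (V : 'M[R]_(d, r)) (a : 'rV[R]_r) :
  \sum_(k < r) a 0 k *: (col k U *m (col k V)^T) = U *m diag_mx a *m V^T.
Proof.
apply/matrixP => i j; rewrite summxE mul_mx_diag !mxE; apply: eq_bigr => k _.
by rewrite !mxE big_ord1 !mxE mulrCA mulrA.
Qed.

Lemma trmx_diag_factor (R : comPzSemiRingType) (m n r : nat) (L : 'M[R]_(m, r))
    (W : 'M[R]_(n, r)) (a : 'rV[R]_r) :
  (L *m diag_mx a *m W^T)^T = W *m diag_mx a *m L^T.
Proof. by rewrite !trmx_mul trmxK tr_diag_mx mulmxA. Qed.

Lemma mulmx_diag_factor (R : pzSemiRingType) (m p q r : nat) (L : 'M[R]_(m, r))
    (W : 'M[R]_(r, q)) (V : 'M[R]_(q, r)) (L' : 'M[R]_(r, p)) (a b : 'rV[R]_r) :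
  W *m V = 1%:M ->
  L *m diag_mx a *m W *m (V *m diag_mx b *m L') =
  L *m diag_mx (\row_k (a 0 k * b 0 k)) *m L'.
Proof.
move=> WV; rewrite -!mulmxA (mulmxA W) WV mul1mx (mulmxA (diag_mx a)) mulmx_diag.
by rewrite !mulmxA.
Qed.

Lemma quad_form_diag (R : comPzSemiRingType) (r : nat) (x a : 'rV[R]_r) :
  (x *m diag_mx a *m x^T) 0 0 = \sum_k a 0 k * x 0 k ^+ 2.
Proof.
rewrite mul_mx_diag !mxE; apply: eq_bigr => k _.
by rewrite !mxE mulrAC mulrC expr2.
Qed.

Lemma mulmx_ginv_range (R : comPzSemiRingType) (m n : nat) (M : 'M[R]_n) (G : 'M[R]_n)
    (c : 'M[R]_(m, n)) :
  M^T = M -> M *m G *m M = M -> c *m M *m G *m (c *m M)^T = c *m M *m c^T.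
Proof.
by move=> MT MGM; rewrite trmx_mul MT -[in RHS]MGM !mulmxA.
Qed.

Lemma leverage_diag_factor (R : realType) (n d r : nat) (U : 'M[R]_(n, r))
    (V : 'M[R]_(d, r)) (a : 'rV[R]_r) (j : 'I_n) :
  U^T *m U = 1%:M -> V^T *m V = 1%:M ->
  leverage (U *m diag_mx a *m V^T) j = \sum_(k | a 0 k != 0) U j k ^+ 2.
Proof.
move=> UU VV; set A := U *m diag_mx a *m V^T.
(* Inverting the nonzero entries of [a] (and keeping its zeros, as [0^-1 = 0])
   yields the pseudoinverse of the Gram matrix [V diag(a^2) V^T]. *)
pose b := \row_k (a 0 k)^-1.
pose M := A^T *m A.
have defM : M = V *m diag_mx (\row_k (a 0 k * a 0 k)) *m V^T.
  by rewrite /M trmx_diag_factor mulmx_diag_factor.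
have MT : M^T = M by rewrite defM trmx_diag_factor.
have pinvM : is_pinv M (V *m diag_mx (\row_k (b 0 k * b 0 k)) *m V^T).
  rewrite defM; split; rewrite !mulmx_diag_factor // ?trmx_diag_factor //;
    congr (_ *m diag_mx _ *m _); apply/rowP => k; rewrite !mxE;
    by have [->|ak] := eqVneq (a 0 k) 0; rewrite ?invr0 ?mul0r //; field.
pose c := row j U *m diag_mx b *m V^T.
have rowA : row j A = c *m M.
  rewrite defM mulmx_diag_factor // !row_mul; congr (_ *m diag_mx _ *m _).
  apply/rowP => k; rewrite !mxE.
  by have [->|ak] := eqVneq (a 0 k) 0; rewrite ?mul0r ?mulr0 //; field.
have [MGM _ _ _] := pinvP pinvM.
rewrite /leverage -/M rowA mulmx_ginv_range // defM mulmx_diag_factor //.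
rewrite trmx_diag_factor mulmx_diag_factor // quad_form_diag [RHS]big_mkcond /=.
apply: eq_bigr => k _; rewrite !mxE.
have [->|ak] := eqVneq (a 0 k) 0; first by rewrite !(mul0r, mulr0).
by rewrite -[RHS]mul1r; congr (_ * _); field.
Qed.

Lemma row_sqnorm_diag_factor (R : comPzSemiRingType) (n d r : nat) (U : 'M[R]_(n, r))
    (V : 'M[R]_(d, r)) (a : 'rV[R]_r) (j : 'I_n) :
  V^T *m V = 1%:M ->
  \sum_(i < d) (U *m diag_mx a *m V^T) j i ^+ 2 = \sum_k a 0 k ^+ 2 * U j k ^+ 2.
Proof.
move=> VV; have -> : \sum_i (U *m diag_mx a *m V^T) j i ^+ 2 =
    (row j (U *m diag_mx a *m V^T) *m (row j (U *m diag_mx a *m V^T))^T) 0 0.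
  by rewrite !mxE; apply: eq_bigr => i _; rewrite !mxE expr2.
rewrite !row_mul trmx_diag_factor mulmx_diag_factor // quad_form_diag.
by apply: eq_bigr => k _; rewrite !mxE expr2.
Qed.

Lemma sum_above_sqrt_le (R : rcfType) (I : finType) (g : R) (s w : I -> R) :
  0 < g -> (forall k, 0 <= w k) ->
  \sum_(k | Num.sqrt g <= s k) w k <= g^-1 * \sum_k s k ^+ 2 * w k.
Proof.
move=> g0 w0; rewrite mulr_sumr big_mkcond /=; apply: ler_sum => k _.
have sw0 : 0 <= g^-1 * (s k ^+ 2 * w k).
  by rewrite mulr_ge0 ?invr_ge0 ?(ltW g0) // mulr_ge0 ?sqr_ge0 ?w0.
case: ifP => // gs; rewrite mulrA -[leLHS]mul1r ler_wpM2r // ler_pdivlMl // mulr1.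
have s0 : 0 <= s k := le_trans (sqrtr_ge0 g) gs.
by rewrite -(ler_sqrt _ (sqr_ge0 (s k))) sqrtr_sqr ger0_norm.
Qed.

Theorem mainTheorem2 (R : realType) (n d : nat) (X : 'M[R]_(n, d)) (gamma : R)
    (r : nat) (s : 'I_r -> R) (U : 'M[R]_(n, r)) (V : 'M[R]_(d, r)) :
  (forall i : 'I_n, \sum_(j < d) X i j ^+ 2 <= 1) ->
  0 < gamma ->
  is_svd X s U V ->
  forall j : 'I_n, leverage (smoothed gamma s U V) j <= gamma^-1.
Proof.
move=> X_row gamma0 [s0 UU VV defX] j.
have {}defX : X = U *m diag_mx (\row_k s k) *m V^T.
  by rewrite -sum_diag_outer defX; apply: eq_bigr => k _; rewrite mxE.
have rowU : \sum_k s k ^+ 2 * U j k ^+ 2 <= 1.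
  have := X_row j; rewrite defX row_sqnorm_diag_factor //.
  by under eq_bigr do rewrite mxE.
pose t := \row_k (if Num.sqrt gamma <= s k then s k else 0).
have -> : smoothed gamma s U V = U *m diag_mx t *m V^T.
  rewrite -sum_diag_outer /smoothed big_mkcond; apply: eq_bigr => k _.
  by rewrite mxE; case: ifP; rewrite ?scale0r.
rewrite leverage_diag_factor //.
have -> : \sum_(k | t 0 k != 0) U j k ^+ 2 = \sum_(k | Num.sqrt gamma <= s k) U j k ^+ 2.
  by apply: eq_bigl => k; rewrite mxE; case: ifP; rewrite ?eqxx // gt_eqF.
apply: le_trans (sum_above_sqrt_le _ gamma0 (fun k => sqr_ge0 (U j k))) _.
by rewrite -[leRHS]mulr1 ler_wpM2l // invr_ge0 ltW.
Qed.
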